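(* Let $\mathcal{L}\subseteq\mathcal{L}_c$ be a class of latency functions and consider a parallel-link network with $n=2$ links, unit demand and $\ell_1,\ell_2\in\mathcal{L}$. Let $x^*$ be an optimal flow. If there is $i\in\{1,2\}$ with $x_i(0)>x^*_i$ and $x_i(0)\le\frac12$, then $$C(x(0))\le \frac{1}{1-\mu_1(\mathcal{L})/2}\,C(x^* ).$$
   Context: $\mathcal{L}_c$: strictly increasing, convex, continuously differentiable functions $\mathbb{R}_+\to\mathbb{R}_+$. Flows $x\in\mathbb{R}^2_+$ with $x_1+x_2=1$; $C(x)=\sum_i\ell_i(x_i)x_i$; $x^*$ minimizes $C$ over flows. $x(0)$ is the (untolled) Wardrop equilibrium: for all $i,j$ with $x_i>0$, $\ell_i(x_i)\le\ell_j(x_j)$. For $\ell\in\mathcal{L}$ define $\mu_1(\ell)=\sup_{x,x^*\ge0}\frac{(\ell(x)-\ell(x^* ))\,x^*}{\ell(x)\,x}$, and $\mu_1(\mathcal{L})=\sup_{\ell\in\mathcal{L}}\mu_1(\ell)$ (which lies in $[0,1]$). *)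

From Stdlib Require Import Reals Lra.
Open Scope R_scope.

Definition Rplus_dom (y : R) : Prop := 0 <= y.

(* Continuously differentiable on R_+ (one-sided at 0): there is a
   derivative l' on (0,oo), l' extends continuously to [0,oo), and l is
   continuous on [0,oo) (relative to the domain [0,oo)). *)
Definition C1_on_Rplus (l : R -> R) : Prop :=
  exists l' : R -> R,
    (forall x, 0 < x -> derivable_pt_lim l x (l' x)) /\
    (forall x, 0 <= x -> limit1_in l' Rplus_dom (l' x) x) /\
    (forall x, 0 <= x -> limit1_in l Rplus_dom (l x) x).

Definition in_Lc (l : R -> R) : Prop :=
  (forall x, 0 <= x -> 0 <= l x) /\
  (forall x y, 0 <= x -> x < y -> l x < l y) /\
  (forall x y t, 0 <= x -> 0 <= y -> 0 <= t <= 1 ->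
     l (t * x + (1 - t) * y) <= t * l x + (1 - t) * l y) /\
  C1_on_Rplus l.

(* The set of ratios whose supremum is mu_1(l); the ratio is only defined
   when l(x) x <> 0, i.e. x > 0 (l(x) > 0 for x > 0 on L_c). *)
Definition mu1_ratios (l : R -> R) (r : R) : Prop :=
  exists x xs, 0 < x /\ 0 <= xs /\
    r = (l x - l xs) * xs / (l x * x).

Definition mu1_of (l : R -> R) (m : R) : Prop := is_lub (mu1_ratios l) m.

Definition mu1_class (L : (R -> R) -> Prop) (mu : R) : Prop :=
  is_lub (fun m => exists l, L l /\ mu1_of l m) mu.

Definition is_flow (x1 x2 : R) : Prop := 0 <= x1 /\ 0 <= x2 /\ x1 + x2 = 1.

Definition cost (l1 l2 : R -> R) (x1 x2 : R) : R := l1 x1 * x1 + l2 x2 * x2.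

Definition is_optimal (l1 l2 : R -> R) (x1 x2 : R) : Prop :=
  is_flow x1 x2 /\
  forall y1 y2, is_flow y1 y2 -> cost l1 l2 x1 x2 <= cost l1 l2 y1 y2.

Definition is_wardrop (l1 l2 : R -> R) (x1 x2 : R) : Prop :=
  is_flow x1 x2 /\
  (0 < x1 -> l1 x1 <= l2 x2) /\ (0 < x2 -> l2 x2 <= l1 x1).

(* At the equilibrium both links are used (x_i(0) > x*_i >= 0 and the other
   link carries at least 1/2), so they share a common latency λ, which is
   also the equilibrium cost.  On the optimum, the link that lost flow
   contributes [l_i(x*_i) x*_i >= λ x*_i - μ λ x_i(0) >= λ x*_i - μ λ / 2] by
   the definition of μ and x_i(0) <= 1/2, while the other link gained flow
   and hence has latency at least λ.  Summing bounds the cost of x* below by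
   (1 - μ/2) λ. *)

From Stdlib Require Import Reals Lra Psatz.
Open Scope R_scope.

Lemma in_Lc_pos (l : R -> R) (x : R) : in_Lc l -> 0 < x -> 0 < l x.
Proof.
  intros [Hnonneg [Hincr _]] Hx.
  pose proof (Hnonneg 0 (Rle_refl 0)).
  pose proof (Hincr 0 x (Rle_refl 0) Hx).
  lra.
Qed.

Lemma in_Lc_mu1_numerator_le (l : R -> R) (x xs : R) :
  in_Lc l -> 0 < x -> 0 <= xs -> (l x - l xs) * xs <= l x * x.
Proof.
  intros Hl Hx Hxs.
  pose proof (in_Lc_pos l x Hl Hx).
  destruct Hl as [Hnonneg [Hincr _]].
  destruct (Rle_lt_dec xs x) as [Hle | Hlt].
  - pose proof (Hnonneg xs Hxs). nra.
  - pose proof (Hincr x xs (Rlt_le _ _ Hx) Hlt). nra.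
Qed.

Lemma in_Lc_mu1_ratio_le1 (l : R -> R) (r : R) :
  in_Lc l -> mu1_ratios l r -> r <= 1.
Proof.
  intros Hl [x [xs [Hx [Hxs ->]]]].
  pose proof (in_Lc_pos l x Hl Hx).
  pose proof (in_Lc_mu1_numerator_le l x xs Hl Hx Hxs).
  apply Rmult_le_reg_r with (l x * x); [nra |].
  unfold Rdiv; rewrite Rmult_assoc, Rinv_l by nra; lra.
Qed.

Lemma in_Lc_mu1_exists (l : R -> R) : in_Lc l -> exists m, mu1_of l m.
Proof.
  intros Hl.
  destruct (completeness (mu1_ratios l)) as [m Hm].
  - exists 1; intros r Hr; exact (in_Lc_mu1_ratio_le1 l r Hl Hr).
  - exists 0, 1, 0; repeat split; lra.
  - exists m; exact Hm.
Qed.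

Section Mu1Class.

Variable L : (R -> R) -> Prop.
Hypothesis HL : forall l, L l -> in_Lc l.
Variable mu : R.
Hypothesis Hmu : mu1_class L mu.

Lemma mu1_class_le1 : mu <= 1.
Proof.
  apply (proj2 Hmu); intros m [l [Hl Hm]].
  apply (proj2 Hm); intros r Hr.
  exact (in_Lc_mu1_ratio_le1 l r (HL l Hl) Hr).
Qed.

Lemma mu1_class_bound (l : R -> R) (x xs : R) :
  L l -> 0 < x -> 0 <= xs -> (l x - l xs) * xs <= mu * (l x * x).
Proof.
  intros Hl Hx Hxs.
  destruct (in_Lc_mu1_exists l (HL l Hl)) as [m Hm].
  assert (Hratio : (l x - l xs) * xs / (l x * x) <= mu).
  { apply Rle_trans with m.
    - apply (proj1 Hm); exists x, xs; auto.
    - apply (proj1 Hmu); exists l; auto. }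
  pose proof (in_Lc_pos l x (HL l Hl) Hx).
  apply Rmult_le_compat_r with (r := l x * x) in Hratio; [| nra].
  unfold Rdiv in Hratio; rewrite Rmult_assoc, Rinv_l in Hratio by nra.
  lra.
Qed.

Lemma mu1_class_nonneg (l : R -> R) : L l -> 0 <= mu.
Proof.
  intros Hl.
  pose proof (mu1_class_bound l 1 0 Hl Rlt_0_1 (Rle_refl 0)).
  pose proof (in_Lc_pos l 1 (HL l Hl) Rlt_0_1).
  nra.
Qed.

Lemma flow_cost_ge_scaled_latency (l1 l2 : R -> R) (xs1 xs2 x1 x2 : R) :
  L l1 -> L l2 -> is_flow xs1 xs2 -> is_flow x1 x2 -> l1 x1 = l2 x2 ->
  xs1 < x1 -> x1 <= 1/2 ->
  (1 - mu / 2) * l1 x1 <= cost l1 l2 xs1 xs2.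
Proof.
  intros Hl1 Hl2 [Hs1 [Hs2 Hs]] [Hx1 [Hx2 Hx]] Heq Hlt Hhalf.
  unfold cost.
  pose proof (mu1_class_nonneg l1 Hl1) as Hmu0.
  pose proof (in_Lc_pos l1 x1 (HL l1 Hl1) ltac:(lra)) as Hlam.
  assert (Hlink1 : l1 x1 * xs1 - mu * l1 x1 / 2 <= l1 xs1 * xs1).
  { pose proof (mu1_class_bound l1 x1 xs1 Hl1 ltac:(lra) Hs1).
    assert (0 <= mu * l1 x1 * (1/2 - x1)) by (apply Rmult_le_pos; nra).
    nra. }
  assert (Hlink2 : l1 x1 * xs2 <= l2 xs2 * xs2).
  { destruct (HL l2 Hl2) as [_ [Hincr _]].
    pose proof (Hincr x2 xs2 Hx2 ltac:(lra)).
    nra. }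
  nra.
Qed.

Lemma wardrop_cost_bound (l1 l2 : R -> R) (xs1 xs2 x1 x2 : R) :
  L l1 -> L l2 -> is_flow xs1 xs2 -> is_wardrop l1 l2 x1 x2 ->
  xs1 < x1 -> x1 <= 1/2 ->
  cost l1 l2 x1 x2 <= / (1 - mu / 2) * cost l1 l2 xs1 xs2.
Proof.
  intros Hl1 Hl2 Hs [Hf [W1 W2]] Hlt Hhalf.
  pose proof Hs as [Hs1 _]; pose proof Hf as [_ [_ Hx]].
  assert (Heq : l1 x1 = l2 x2) by (apply Rle_antisym; [apply W1 | apply W2]; lra).
  assert (Hcost : cost l1 l2 x1 x2 = l1 x1)
    by (unfold cost; rewrite <- Heq; replace x2 with (1 - x1) by lra; ring).
  pose proof (flow_cost_ge_scaled_latency l1 l2 xs1 xs2 x1 x2 Hl1 Hl2 Hs Hf Heq Hlt Hhalf).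
  pose proof mu1_class_le1.
  rewrite Hcost.
  apply Rmult_le_reg_l with (1 - mu / 2); [lra |].
  rewrite <- Rmult_assoc, Rinv_r by lra.
  lra.
Qed.

End Mu1Class.

Lemma cost_swap (l1 l2 : R -> R) (x1 x2 : R) :
  cost l1 l2 x1 x2 = cost l2 l1 x2 x1.
Proof. unfold cost; ring. Qed.

Lemma is_flow_swap (x1 x2 : R) : is_flow x1 x2 -> is_flow x2 x1.
Proof. unfold is_flow; lra. Qed.

Lemma is_wardrop_swap (l1 l2 : R -> R) (x1 x2 : R) :
  is_wardrop l1 l2 x1 x2 -> is_wardrop l2 l1 x2 x1.
Proof. intros [Hf [W1 W2]]; split; [apply is_flow_swap |]; tauto. Qed.

Theorem mainTheorem10
  (L : (R -> R) -> Prop) (HL : forall l, L l -> in_Lc l)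
  (l1 l2 : R -> R) (Hl1 : L l1) (Hl2 : L l2)
  (mu : R) (Hmu : mu1_class L mu)
  (xs1 xs2 : R) (Hopt : is_optimal l1 l2 xs1 xs2)
  (x01 x02 : R) (Hwe : is_wardrop l1 l2 x01 x02)
  (Hi : (xs1 < x01 /\ x01 <= 1/2) \/ (xs2 < x02 /\ x02 <= 1/2)) :
  cost l1 l2 x01 x02 <= / (1 - mu / 2) * cost l1 l2 xs1 xs2.
Proof.
  destruct Hopt as [Hs _].
  destruct Hi as [[Hlt Hhalf] | [Hlt Hhalf]].
  - exact (wardrop_cost_bound L HL mu Hmu l1 l2 xs1 xs2 x01 x02
             Hl1 Hl2 Hs Hwe Hlt Hhalf).
  - rewrite (cost_swap l1 l2 x01), (cost_swap l1 l2 xs1).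
    exact (wardrop_cost_bound L HL mu Hmu l2 l1 xs2 xs1 x02 x01
             Hl2 Hl1 (is_flow_swap _ _ Hs) (is_wardrop_swap _ _ _ _ Hwe) Hlt Hhalf).
Qed.
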